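(* Assume that at each bus either there is no generator or there are at least two generators, i.e., $n_i=0$ or $n_i\ge 2$ for every $i\in\{1,\dots,N_b\}$. Then the inelastic electricity market game has an efficient Nash equilibrium.
   Context: Network: a directed graph $\mathcal G=(\mathcal V,\mathcal E)$ with buses $\mathcal V=\{1,\dots,N_b\}$ and power lines $\mathcal E$; $\mathcal N_i^+=\{j:(i,j)\in\mathcal E\}$, $\mathcal N_i^-=\{j:(j,i)\in\mathcal E\}$. Each line $(i,j)$ carries flow $z_{ij}\in\mathbb R$ with limit $\bar z_{ij}>0$. There are $N$ generators labelled $1,\dots,N$; $G_i$ is the (possibly empty) set of generators at bus $i$, the $G_i$ partition $\{1,\dots,N\}$, and $n_i=|G_i|$. Bus $i$ has load $y_i\ge0$. Generator $n$ has cost $f_n(x)=a_nx^2+c_nx$ with $a_n>0$, $c_n\ge 0$. DC-OPF: minimize $\sum_{n=1}^N f_n(x_n)$ over $(x,z)$ subject to $\sum_{j\in\mathcal N_i^+}z_{ij}-\sum_{j\in\mathcal N_i^-}z_{ji}=\sum_{n\in G_i}x_n-y_i$ for all buses $i$ (the sum over $G_i$ being $0$ if $G_i=\emptyset$), $-\bar z_{ij}\le z_{ij}\le\bar z_{ij}$ for all $(i,j)\in\mathcal E$, and $x\ge 0$. This problem is assumed feasible; $(x^*,z^* )$ denotes an optimizer, and $x^*$ is unique. S-DC-OPF given bids $b\in\mathbb R^N_{\ge0}$: same constraints, objective $\sum_{n=1}^N b_nx_n$. Inelastic electricity market game: players are generators $n$, actions are bids $b_n\ge 0$, and given bids $b$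 and an optimizer $(x^{\rm opt}(b),z^{\rm opt}(b))$ of S-DC-OPF chosen by the operator, player $n$'s payoff is $u_n(b_n,x^{\rm opt}_n(b))=b_nx^{\rm opt}_n(b)-f_n(x^{\rm opt}_n(b))$. Nash equilibrium: a bid profile $b^*\ge0$ for which there exists an optimizer $(x^{\rm opt}(b^* ),z^{\rm opt}(b^* ))$ of S-DC-OPF with bids $b^*$ such that for all $n$, all $b_n\ge0$, and all optimizers $x^{\rm opt}(b_n,b^*_{-n})$ of S-DC-OPF with bids $(b_n,b^*_{-n})$, $u_n(b_n,x^{\rm opt}_n(b_n,b^*_{-n}))\le u_n(b_n^*,x^{\rm opt}_n(b^* ))$. Efficient bid: $b^*\ge0$ such that $(x^*,z^* )$ is an optimizer of S-DC-OPF with bids $b^*$ and $x^*_n=\arg\max_{x\ge0}(b^*_nx-f_n(x))$ for all $n$. An efficient Nash equilibrium is an efficient bid that is a Nash equilibrium. *)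

(* the statement is purely algebraic/order-theoretic, so it is
   stated over an arbitrary real field R (this includes the real numbers). *)
From HB Require Import structures.
From mathcomp Require Import all_boot all_order all_algebra.
Set Implicit Arguments. Unset Strict Implicit. Unset Printing Implicit Defensive.
Import Order.TTheory GRing.Theory Num.Theory.
Local Open Scope ring_scope.

Section Market.
Variable R : realFieldType.
Variables Nb N : nat.
Variable E : {set 'I_Nb * 'I_Nb}.
Variable zbar : 'I_Nb * 'I_Nb -> R.
(* loc n = the bus at which generator n sits; G_i = loc^-1(i) partitions gens *)
Variable loc : 'I_N -> 'I_Nb.
Variable y : 'I_Nb -> R.

Definition gens_at (i : 'I_Nb) : {set 'I_N} := [set n | loc n == i].

(* feasible set of DC-OPF / S-DC-OPF (x = generation, z = line flows) *)
Definition feasible (x : 'I_N -> R) (z : 'I_Nb * 'I_Nb -> R) : Prop :=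
  (forall i : 'I_Nb,
      \sum_(j : 'I_Nb | (i, j) \in E) z (i, j)
      - \sum_(j : 'I_Nb | (j, i) \in E) z (j, i)
      = \sum_(n in gens_at i) x n - y i)
  /\ (forall e, e \in E -> - zbar e <= z e <= zbar e)
  /\ (forall n, 0 <= x n).

Definition gcost (a c : 'I_N -> R) (n : 'I_N) (x : R) : R :=
  a n * x ^+ 2 + c n * x.

Definition DCOPF_opt (a c : 'I_N -> R) x z : Prop :=
  feasible x z /\
  forall x' z', feasible x' z' ->
    \sum_n gcost a c n (x n) <= \sum_n gcost a c n (x' n).

Definition SDCOPF_opt (b : 'I_N -> R) x z : Prop :=
  feasible x z /\
  forall x' z', feasible x' z' ->
    \sum_n b n * x n <= \sum_n b n * x' n.

Definition payoff (a c : 'I_N -> R) (n : 'I_N) (bn xn : R) : R :=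
  bn * xn - gcost a c n xn.

Definition upd_bid (b : 'I_N -> R) (n : 'I_N) (bn : R) : 'I_N -> R :=
  fun m => if m == n then bn else b m.

Definition nonneg_bids (b : 'I_N -> R) : Prop := forall n, 0 <= b n.

Definition is_NE (a c : 'I_N -> R) (b : 'I_N -> R) : Prop :=
  nonneg_bids b /\
  exists xo zo, SDCOPF_opt b xo zo /\
    forall n (bn : R), 0 <= bn ->
      forall x' z', SDCOPF_opt (upd_bid b n bn) x' z' ->
        payoff a c n bn (x' n) <= payoff a c n (b n) (xo n).

Definition is_argmax_nonneg (g : R -> R) (x0 : R) : Prop :=
  0 <= x0 /\ forall x, 0 <= x -> x != x0 -> g x < g x0.

Definition efficient_bid (a c : 'I_N -> R) xs zs (b : 'I_N -> R) : Prop :=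
  nonneg_bids b /\ SDCOPF_opt b xs zs /\
  forall n, is_argmax_nonneg (fun x => b n * x - gcost a c n x) (xs n).

Definition efficient_NE (a c : 'I_N -> R) xs zs (b : 'I_N -> R) : Prop :=
  efficient_bid a c xs zs b /\ is_NE a c b.

End Market.

(* Bid at every generator the smallest marginal cost f_k'(x*_k) among the
   generators at its bus.  First-order optimality of the convex DC-OPF says that
   x* minimizes the linear cost sum_n f_n'(x*_n) x_n over the feasible set.
   Moving output between generators at one bus preserves feasibility, so every
   generator producing at x* has the smallest marginal cost of its bus, and
   concentrating each bus's output on its cheapest generator shows that x* also
   solves S-DC-OPF for these bids.  The bid then equals f_n'(x*_n) when x*_n > 0
   and is at most f_n'(0) when x*_n = 0, which is exactly the optimality
   condition for x*_n in max_{x >= 0} b_n x - f_n(x).  A deviating generator that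
   still produces cannot bid above its rival at the same bus (there is one since
   n_i >= 2), else the operator would shift output to the rival; so its revenue
   is at most that under b_n, whose profit is maximal at x*_n. *)

From mathcomp Require Import all_boot all_order all_algebra.
From mathcomp Require Import ring lra.
Import Order.TTheory GRing.Theory Num.Theory.
Set Implicit Arguments. Unset Strict Implicit.
Local Open Scope ring_scope.

Lemma linear_coef_ge0 (R : realFieldType) (G S : R) : 0 <= S ->
  (forall t, 0 < t -> t <= 1 -> 0 <= t * G + t ^+ 2 * S) -> 0 <= G.
Proof.
move=> S_ge0 hG; rewrite leNgt; apply/negP => G_lt0.
(* at this t, t * G + t ^+ 2 * S = t * G / 2 < 0 *)
have SG_gt0 : 0 < 2 * (S - G) by lra.
pose t := - G / (2 * (S - G)).
have tSG : t * (2 * (S - G)) = - G by rewrite /t divfK // gt_eqF.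
have t_gt0 : 0 < t by rewrite divr_gt0 // oppr_gt0.
have t_le1 : t <= 1 by nra.
have := hG t t_gt0 t_le1; rewrite expr2 -mulrA; nra.
Qed.

Lemma sum_if_eq (R : nmodType) (I : finType) (P : pred I) (m : I) (F : I -> R) :
  \sum_(k | P k) (if k == m then F k else 0) = if P m then F m else 0.
Proof.
rewrite -big_mkcondr; case: (boolP (P m)) => Pm.
  by apply: (big_pred1 m) => k /=; case: (eqVneq k m) => [->|]; rewrite ?Pm ?andbF.
by apply: big_pred0 => k; case: (eqVneq k m) => [->|]; rewrite ?andbF // (negbTE Pm).
Qed.

Section Network.
Variables (R : realFieldType) (Nb N : nat) (E : {set 'I_Nb * 'I_Nb}).
Variables (zbar : 'I_Nb * 'I_Nb -> R) (loc : 'I_N -> 'I_Nb) (y : 'I_Nb -> R).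

Lemma sum_by_bus (F : 'I_N -> R) :
  \sum_n F n = \sum_i \sum_(n in gens_at loc i) F n.
Proof.
rewrite (partition_big loc xpredT) //; apply: eq_bigr => i _.
by apply: eq_bigl => n; rewrite inE.
Qed.

Lemma feasible_bus_sums x x' z :
  feasible E zbar loc y x z -> (forall n, 0 <= x' n) ->
  (forall i, \sum_(n in gens_at loc i) x' n = \sum_(n in gens_at loc i) x n) ->
  feasible E zbar loc y x' z.
Proof. by move=> [balance [lim _]] x'_ge0 hsum; do ![split] => // i; rewrite hsum. Qed.

Definition convex_comb (T : Type) (t : R) (f1 f2 : T -> R) k :=
  (1 - t) * f1 k + t * f2 k.

Lemma feasible_convex x1 z1 x2 z2 t :
  feasible E zbar loc y x1 z1 -> feasible E zbar loc y x2 z2 -> 0 <= t <= 1 ->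
  feasible E zbar loc y (convex_comb t x1 x2) (convex_comb t z1 z2).
Proof.
move=> [bal1 [lim1 ge1]] [bal2 [lim2 ge2]] /andP[t_ge0 t_le1]; do ![split].
- move=> i; rewrite /convex_comb !big_split /= -!mulr_sumr.
  have -> : forall A1 A2 B1 B2 : R, (1 - t) * A1 + t * A2 - ((1 - t) * B1 + t * B2)
      = (1 - t) * (A1 - B1) + t * (A2 - B2) by move=> *; ring.
  by rewrite bal1 bal2; ring.
- move=> e eE; have /andP[lo1 hi1] := lim1 e eE; have /andP[lo2 hi2] := lim2 e eE.
  have t'_ge0 : 0 <= 1 - t by lra.
  have := ler_wpM2l t'_ge0 lo1; have := ler_wpM2l t_ge0 lo2.
  have := ler_wpM2l t'_ge0 hi1; have := ler_wpM2l t_ge0 hi2.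
  by rewrite /convex_comb => *; apply/andP; split; lra.
- move=> n; rewrite /convex_comb.
  by apply: addr_ge0; apply: mulr_ge0; rewrite ?subr_ge0.
Qed.

Definition transfer (x : 'I_N -> R) (n m : 'I_N) k :=
  x k + (if k == m then x n else 0) - (if k == n then x n else 0).

Lemma transfer_feasible x z n m :
  feasible E zbar loc y x z -> loc n = loc m ->
  feasible E zbar loc y (transfer x n m) z.
Proof.
move=> hx lnm; have x_ge0 := hx.2.2; apply: (feasible_bus_sums hx).
- move=> k; rewrite /transfer; have := x_ge0 k; have := x_ge0 n.
  by case: (eqVneq k n) => [->|]; case: (eqVneq _ m) => _; lra.
- move=> i; rewrite /transfer !big_split /= sumrN !sum_if_eq !inE lnm.
  by case: (loc m == i); ring.
Qed.

Lemma sum_transfer (w x : 'I_N -> R) n m :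
  \sum_k w k * transfer x n m k = \sum_k w k * x k + x n * (w m - w n).
Proof.
rewrite /transfer; under eq_bigr => k _ do
  rewrite mulrBr mulrDr !(fun_if (fun v => w k * v)) mulr0.
rewrite sumrB big_split /= !(sum_if_eq xpredT _ (fun k => w k * x n)) /=; ring.
Qed.

Lemma SDCOPF_opt_bid_le_same_bus w x z n m :
  SDCOPF_opt E zbar loc y w x z -> 0 < x n -> loc m = loc n -> w n <= w m.
Proof.
move=> [hx opt] xn_gt0 lmn.
have := opt _ _ (transfer_feasible hx (esym lmn)).
by rewrite sum_transfer lerDl pmulr_rge0 // subr_ge0.
Qed.

Section BusPrice.
Variable g : 'I_N -> R.

Definition cheapest (i : 'I_Nb) : option 'I_N :=
  [pick k | (loc k == i) && [forall j, (loc j == i) ==> (g k <= g j)]].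

Variant cheapest_spec (i : 'I_Nb) : option 'I_N -> Type :=
  | CheapestNone of gens_at loc i = set0 : cheapest_spec i None
  | CheapestSome k of loc k = i & (forall j, loc j = i -> g k <= g j) :
      cheapest_spec i (Some k).

Lemma cheapestP i : cheapest_spec i (cheapest i).
Proof.
rewrite /cheapest; case: pickP => [k /andP[/eqP lk /forallP gk] | none].
  by apply: CheapestSome => // j lj; move/implyP: (gk j); apply; rewrite lj.
apply: CheapestNone; apply/setP => n; rewrite !inE; apply/negP => /eqP ln.
have [k lk gk] := @arg_minP _ R _ n (fun k => loc k == i) g (introT eqP ln).
move/negP: (none k); apply; rewrite lk /=.
by apply/forallP => j; apply/implyP; exact: gk.
Qed.

Definition bus_price (i : 'I_Nb) : R := if cheapest i is Some k then g k else 0.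

Lemma bus_price_le n : bus_price (loc n) <= g n.
Proof.
rewrite /bus_price; case: cheapestP => [empty | k _ gk]; last exact: gk.
by have := in_set0 n; rewrite -empty inE eqxx.
Qed.

Lemma bus_price_ge0 i : (forall n, 0 <= g n) -> 0 <= bus_price i.
Proof. by rewrite /bus_price; case: cheapestP. Qed.

Definition concentrate (x : 'I_N -> R) n :=
  if cheapest (loc n) == Some n then \sum_(j in gens_at loc (loc n)) x j else 0.

Lemma sum_concentrate_at (w x : 'I_N -> R) i :
  \sum_(n in gens_at loc i) w n * concentrate x n
  = (if cheapest i is Some k then w k else 0) * \sum_(n in gens_at loc i) x n.
Proof.
have -> : \sum_(n in gens_at loc i) w n * concentrate x n = \sum_(n in gens_at loc i)
    w n * (if cheapest i == Some n then \sum_(j in gens_at loc i) x j else 0).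
  by apply: eq_bigr => n; rewrite inE => /eqP <-.
case: cheapestP => [empty | k lk _]; first by rewrite empty !big_set0 mulr0.
under eq_bigr => n _ do
  rewrite -[Some k == Some n]/(k == n) eq_sym (fun_if (fun v => w n * v)) mulr0.
by rewrite (sum_if_eq (fun n => n \in gens_at loc i) k (fun n => w n * _)) inE lk eqxx.
Qed.

Lemma concentrate_feasible x z :
  feasible E zbar loc y x z -> feasible E zbar loc y (concentrate x) z.
Proof.
move=> hx; apply: (feasible_bus_sums hx).
  move=> n; rewrite /concentrate; case: ifP => // _.
  by apply: sumr_ge0 => j _; exact: hx.2.2.
move=> i; rewrite -(eq_bigr _ (fun n _ => mul1r (concentrate x n))) sum_concentrate_at.
by case: cheapestP => [empty | k _ _]; rewrite ?mul1r // empty !big_set0 mulr0.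
Qed.

Lemma sum_concentrate x :
  \sum_n g n * concentrate x n = \sum_n bus_price (loc n) * x n.
Proof.
rewrite [LHS]sum_by_bus [RHS]sum_by_bus; apply: eq_bigr => i _.
rewrite sum_concentrate_at mulr_sumr; apply: eq_bigr => n.
by rewrite inE => /eqP ->.
Qed.

Lemma SDCOPF_opt_bus_price_eq x z n :
  SDCOPF_opt E zbar loc y g x z -> 0 < x n -> bus_price (loc n) = g n.
Proof.
move=> hopt xn_gt0; apply/eqP; rewrite eq_le bus_price_le /= /bus_price.
case: cheapestP => [empty | k lk _]; last exact: SDCOPF_opt_bid_le_same_bus hopt xn_gt0 lk.
by have := in_set0 n; rewrite -empty inE eqxx.
Qed.

Lemma bus_price_complementarity x z n x' :
  SDCOPF_opt E zbar loc y g x z -> 0 <= x' ->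
  (bus_price (loc n) - g n) * (x' - x n) <= 0.
Proof.
move=> hopt x'_ge0; have := hopt.1.2.2 n; rewrite le_eqVlt => /predU1P[<- | xn_gt0].
  by rewrite subr0 mulr_le0_ge0 // subr_le0 bus_price_le.
by rewrite (SDCOPF_opt_bus_price_eq hopt xn_gt0) subrr mul0r.
Qed.

Lemma SDCOPF_opt_bus_price x z :
  SDCOPF_opt E zbar loc y g x z ->
  SDCOPF_opt E zbar loc y (fun n => bus_price (loc n)) x z.
Proof.
move=> hopt; split=> [|x' z' hx']; first exact: hopt.1.
have <- : \sum_n g n * x n = \sum_n bus_price (loc n) * x n.
  apply: eq_bigr => n _; have := hopt.1.2.2 n.
  rewrite le_eqVlt => /predU1P[<- | xn_gt0]; first by rewrite !mulr0.
  by rewrite (SDCOPF_opt_bus_price_eq hopt xn_gt0).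
rewrite -sum_concentrate; exact: hopt.2 _ _ (concentrate_feasible hx').
Qed.

End BusPrice.

Definition marginal_cost (a c x : 'I_N -> R) n := 2 * a n * x n + c n.

Lemma DCOPF_opt_marginal a c x z : (forall n, 0 <= a n) ->
  DCOPF_opt E zbar loc y a c x z ->
  SDCOPF_opt E zbar loc y (marginal_cost a c x) x z.
Proof.
move=> a_ge0 [hx opt]; split=> // x' z' hx'.
pose G := \sum_n marginal_cost a c x n * (x' n - x n).
pose S := \sum_n a n * (x' n - x n) ^+ 2.
have S_ge0 : 0 <= S by apply: sumr_ge0 => n _; rewrite mulr_ge0 ?sqr_ge0.
suff G_ge0 : 0 <= G by rewrite -subr_ge0 -sumrB; under eq_bigr do rewrite -mulrBr.
apply: (linear_coef_ge0 S_ge0) => t t_gt0 t_le1.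
have := opt _ _ (feasible_convex hx hx' (introT andP (conj (ltW t_gt0) t_le1))).
have -> : \sum_n gcost a c n (convex_comb t x x' n)
    = \sum_n gcost a c n (x n) + (t * G + t ^+ 2 * S).
  rewrite /G /S !mulr_sumr -!big_split /=; apply: eq_bigr => n _.
  by rewrite /gcost /convex_comb /marginal_cost; ring.
by rewrite lerDl.
Qed.

End Network.

Lemma payoff_expand (R : realFieldType) (N : nat) (a c xs : 'I_N -> R) n b x :
  payoff a c n b x = payoff a c n b (xs n)
    + (b - marginal_cost a c xs n) * (x - xs n) - a n * (x - xs n) ^+ 2.
Proof. by rewrite /payoff /gcost /marginal_cost; ring. Qed.

Lemma exists_rival (Nb N : nat) (loc : 'I_N -> 'I_Nb) n :
  #|gens_at loc (loc n)| = 0%N \/ (2 <= #|gens_at loc (loc n)|)%N ->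
  exists2 m, m != n & loc m = loc n.
Proof.
have n_at : n \in gens_at loc (loc n) by rewrite inE.
case=> [/eqP | ]; first by rewrite cards_eq0 => /eqP empty; rewrite empty inE in n_at.
rewrite (cardD1 n) n_at add1n ltnS => /card_gt0P[m].
by rewrite !inE => /andP[mn /eqP lm]; exists m.
Qed.

Theorem proposition3p1 (R : realFieldType) (Nb N : nat)
  (E : {set 'I_Nb * 'I_Nb}) (zbar : 'I_Nb * 'I_Nb -> R)
  (loc : 'I_N -> 'I_Nb) (y : 'I_Nb -> R) (a c : 'I_N -> R)
  (hzbar : forall e, e \in E -> 0 < zbar e)
  (hy : forall i, 0 <= y i)
  (ha : forall n, 0 < a n)
  (hc : forall n, 0 <= c n)
  (hfeas : exists x z, feasible E zbar loc y x z)
  (xs : 'I_N -> R) (zs : 'I_Nb * 'I_Nb -> R)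
  (hopt : DCOPF_opt E zbar loc y a c xs zs)
  (huniq : forall x z, DCOPF_opt E zbar loc y a c x z -> forall n, x n = xs n)
  (hbus : forall i : 'I_Nb,
      #|gens_at loc i| = 0%N \/ (2 <= #|gens_at loc i|)%N) :
  exists b : 'I_N -> R, efficient_NE E zbar loc y a c xs zs b.
Proof.
pose g := marginal_cost a c xs; pose b n := bus_price loc g (loc n).
have a_ge0 n : 0 <= a n := ltW (ha n).
have xs_ge0 := hopt.1.2.2.
have hg : SDCOPF_opt E zbar loc y g xs zs := DCOPF_opt_marginal a_ge0 hopt.
have b_ge0 : nonneg_bids b.
  by move=> n; apply: bus_price_ge0 => m; rewrite addr_ge0 ?mulr_ge0.
have best n x : 0 <= x ->
    payoff a c n (b n) x + a n * (x - xs n) ^+ 2 <= payoff a c n (b n) (xs n).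
  move=> x_ge0; have := bus_price_complementarity n hg x_ge0.
  by rewrite (payoff_expand _ _ xs) /b /g; lra.
exists b; split.
  split; [by [] | split; first exact: SDCOPF_opt_bus_price hg].
  move=> n; split=> // x x_ge0 x_neq /=; have := best n x x_ge0; rewrite /payoff.
  have : 0 < a n * (x - xs n) ^+ 2 by rewrite mulr_gt0 ?exprn_even_gt0 ?subr_eq0.
  lra.
split=> //; exists xs, zs; split=> [|n bn bn_ge0 x' z' hx']; first exact: SDCOPF_opt_bus_price.
have x'n_ge0 := hx'.1.2.2 n.
suff bid_le : bn * x' n <= b n * x' n.
  have := best n _ x'n_ge0; have := mulr_ge0 (a_ge0 n) (sqr_ge0 (x' n - xs n)).
  by rewrite /payoff; lra.
move: x'n_ge0; rewrite le_eqVlt => /predU1P[<- | x'n_gt0]; first by rewrite !mulr0.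
rewrite ler_pM2r //.
have [m mn lm] := exists_rival (hbus (loc n)).
have := SDCOPF_opt_bid_le_same_bus hx' x'n_gt0 lm.
by rewrite /upd_bid eqxx (negbTE mn) /b lm.
Qed.
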